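(* For every $n\ge 3$, the strong metric dimension of the convex polytope graph $S_n$ satisfies $sdim(S_n)=n$ if $n$ is odd and $sdim(S_n)=\frac{3n}{2}$ if $n$ is even.
   Context: For $n\ge 3$, $S_n$ is the graph with vertex set $\{a_i,b_i,c_i,d_i : 1\le i\le n\}$ and edge set $\{a_ia_{i+1}, b_ib_{i+1}, c_ic_{i+1}, d_id_{i+1}, a_{i+1}b_i, a_ib_i, b_ic_i, c_id_i : 1\le i\le n\}$, indices taken modulo $n$. $d(u,v)$ is the graph distance. A vertex $w$ strongly resolves distinct vertices $u,v$ if $d(v,w)=d(v,u)+d(u,w)$ or $d(u,w)=d(u,v)+d(v,w)$. A set $S$ of vertices is a strong resolving set if every two distinct vertices are strongly resolved by some vertex of $S$; $sdim(G)$ is the minimum cardinality of a strong resolving set of $G$. *)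

From mathcomp Require Import all_boot.
Set Implicit Arguments. Unset Strict Implicit. Unset Printing Implicit Defensive.

Section GraphDist.
Variables (T : finType) (adj : rel T).

Definition walk_of_len (k : nat) (u v : T) : bool :=
  [exists p : k.-tuple T, path adj u p && (last u p == v)].

(* A shortest walk
   (if any) has length < #|T|; the default #|T| is only reached for
   disconnected pairs, which do not occur in the (connected) graphs S_n. *)
Definition gdist (u v : T) : nat :=
  \big[minn/#|T|]_(k < #|T| | walk_of_len k u v) k.

Definition strongly_resolves (w u v : T) : bool :=
  (gdist v w == gdist v u + gdist u w) || (gdist u w == gdist u v + gdist v w).

Definition strong_resolving_set (S : {set T}) : bool :=
  [forall u, forall v, (u != v) ==> [exists w in S, strongly_resolves w u v]].

(* strong metric dimension: min cardinality of a strong resolving set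
   (setT is always one, so the default #|T| is harmless). *)
Definition sdim : nat :=
  \big[minn/#|T|]_(S : {set T} | strong_resolving_set S) #|S|.

End GraphDist.

(* The convex polytope graph S_n: vertex (k, i) with k : 'I_4 encodes
   k = 0 -> a_i, 1 -> b_i, 2 -> c_i, 3 -> d_i; indices i : 'I_n (mod n). *)
Definition Sn_vert (n : nat) : finType := ('I_4 * 'I_n)%type.

Definition Sn_edge0 (n : nat) (u v : Sn_vert n) : bool :=
  let: (k, i) := u in let: (l, j) := v in
  [|| (k == l) && (val j == (val i).+1 %% n)                   (* x_i x_{i+1}, x in {a,b,c,d} *)
    , [&& val k == 0, val l == 1 & val i == (val j).+1 %% n]    (* a_{i+1} b_i *)
    | (val l == (val k).+1) && (i == j) ].                      (* a_i b_i, b_i c_i, c_i d_i *)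

Definition Sn_adj (n : nat) : rel (Sn_vert n) :=
  fun u v => Sn_edge0 u v || Sn_edge0 v u.

From mathcomp Require Import all_boot all_order zify.
Set Implicit Arguments. Unset Strict Implicit. Unset Printing Implicit Defensive.
Import Order.TTheory.

(* A set of vertices is strongly resolving iff it meets every pair of mutually
   maximally distant (MMD) vertices, so sdim is the least size of such a cover;
   a cover of size m together with m pairwise disjoint MMD pairs gives sdim = m.
   Distances in S_n have a closed form (see [dist2]), from which the MMD pairs
   are read off: for n odd the ring {a_i} is a cover and a_i d_(i+(n-1)/2) is a
   matching of n MMD pairs; for n even, {a_i | i < n/2} together with the ring
   {d_i} is a cover, matched by the pairs a_i a_(i+n/2) and d_i b_(i+n/2). *)

(** * Graph distance from a potential *)

Section GdistPotential.
Variables (T : finType) (adj : rel T) (u : T) (f : T -> nat).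
Hypotheses (f_u : f u = 0)
  (f_edge : forall v w, adj w v -> f v <= (f w).+1)
  (f_pred : forall v, v != u -> exists2 w, adj w v & (f w).+1 = f v).

Lemma potential_le_walk p : path adj u p -> f (last u p) <= size p.
Proof.
elim/last_ind: p => [|p z IHp] /=; first by rewrite f_u.
rewrite rcons_path last_rcons size_rcons => /andP[/IHp le_p adj_z].
exact: leq_trans (f_edge adj_z) _.
Qed.

Lemma walk_of_potential k v : f v = k -> exists2 p, path adj u p & last u p = v /\ size p = k.
Proof.
elim: k v => [|k IHk] v fv.
  case: (eqVneq v u) => [->|/f_pred[w _]]; first by exists [::].
  by rewrite fv.
case: (eqVneq v u) => [vu|/f_pred[w adj_wv]]; first by rewrite vu f_u in fv.
rewrite fv => -[/IHk[p path_p [last_p size_p]]].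
exists (rcons p v); first by rewrite rcons_path path_p last_p.
by rewrite last_rcons size_rcons size_p.
Qed.

Lemma gdist_potential v : f v < #|T| -> gdist adj u v = f v.
Proof.
move=> fv_lt; apply/eqP; rewrite eqn_leq; apply/andP; split.
  have [p path_p [last_p /eqP size_p]] := walk_of_potential (erefl (f v)).
  have walk_v : walk_of_len adj (Ordinal fv_lt) u v.
    by apply/existsP; exists (Tuple size_p); rewrite /= path_p last_p eqxx.
  exact: (@bigmin_le_cond _ nat _ #|T| (Ordinal fv_lt) _ _ walk_v).
apply: (@le_bigmin _ nat _ _ _ _ _ _ (ltnW fv_lt)) => k /existsP[p /andP[path_p /eqP <-]].
by have := potential_le_walk path_p; rewrite size_tuple.
Qed.

End GdistPotential.

(** * Strong resolving sets and mutually maximally distant pairs *)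

(* These hold in every connected undirected graph; for S_n they are read off
   an explicit distance formula instead. *)
Record metric_graph (T : finType) (adj : rel T) : Prop := MetricGraph {
  adj_sym : symmetric adj;
  gdist_refl : forall u, gdist adj u u = 0;
  gdist_sym : forall u v, gdist adj u v = gdist adj v u;
  gdist_edge : forall u v w, adj w v -> gdist adj u v <= (gdist adj u w).+1;
  gdist_pred : forall u v, v != u -> exists2 w, adj w v & (gdist adj u w).+1 = gdist adj u v
}.

Section StrongResolvingGraph.
Variables (T : finType) (adj : rel T).
Hypothesis G : metric_graph adj.
Local Notation d := (gdist adj).

Lemma gdist_triangle u v w : d u v <= d u w + d w v.
Proof.
have [k dwv] : exists k, d w v = k by exists (d w v).
rewrite dwv; elim: k v dwv => [|k IHk] v dwv.
  case: (eqVneq v w) => [->|/(gdist_pred G)[z _]]; first by rewrite addn0.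
  by rewrite dwv.
case: (eqVneq v w) => [vw|/(gdist_pred G)[z adj_zv]]; first by rewrite vw gdist_refl in dwv.
rewrite dwv => -[/IHk]; have := gdist_edge G u adj_zv; lia.
Qed.

Lemma gdist_gt0 u v : u != v -> 0 < d u v.
Proof. by rewrite eq_sym => /(gdist_pred G)[w _ <-]. Qed.

Definition mutually_maximally_distant (x y : T) : Prop :=
  [/\ x != y, forall z, adj z y -> d x z <= d x y & forall z, adj z x -> d y z <= d x y].

Local Notation mmd := mutually_maximally_distant.

Lemma mmd_sym x y : mmd x y -> mmd y x.
Proof.
case=> xy far_y far_x; split; first by rewrite eq_sym.
  by move=> z /far_x; rewrite (gdist_sym G y x).
by move=> z /far_y; rewrite (gdist_sym G y x).
Qed.

(* Only x and y strongly resolve an MMD pair x y: any other resolving vertex w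
   would make the neighbour of x on a geodesic towards w farther from y. *)
Lemma srs_covers_mmd S x y : strong_resolving_set adj S -> mmd x y -> x \in S \/ y \in S.
Proof.
move=> /forallP/(_ x)/forallP/(_ y) srsS [xy far_y far_x].
move: srsS; rewrite xy => /existsP[w /andP[wS res_w]].
case: (eqVneq x w) => [->|xw]; first by left.
case: (eqVneq y w) => [->|yw]; first by right.
exfalso; case/orP: res_w => /eqP res_w.
  have [z adj_zx dz] := gdist_pred G xw.
  have := gdist_triangle y w z; have := far_x z adj_zx.
  rewrite (gdist_sym G z w) (gdist_sym G x w) (gdist_sym G y x) in res_w dz *; lia.
have [z adj_zy dz] := gdist_pred G yw.
have := gdist_triangle x w z; have := far_y z adj_zy.
rewrite (gdist_sym G z w) (gdist_sym G y w) in res_w dz *; lia.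
Qed.

Lemma geodesic_extension v u :
  exists x, d v x = d v u + d u x /\ forall z, adj z x -> d v z <= d v x.
Proof.
pose through_u w := d v w == d v u + d u w.
have through_u_u : through_u u by rewrite /through_u gdist_refl // addn0.
have [x /eqP dx max_x] := @arg_maxnP _ u through_u (d v) through_u_u.
exists x; split=> // z adj_zx; rewrite leqNgt; apply/negP => far_z.
suff /max_x : through_u z by lia.
have adj_xz : adj x z by rewrite (adj_sym G).
have := gdist_edge G v adj_xz; have := gdist_edge G u adj_xz.
have := gdist_triangle v z u; move=> *; apply/eqP; lia.
Qed.

(* Extend a geodesic from v through u as far as possible, to x, then one from
   x through v, to y: the pair x y is MMD and both of x, y resolve u v. *)
Lemma srs_of_mmd_cover (S : {set T}) :
  (forall x y, mmd x y -> x \in S \/ y \in S) -> strong_resolving_set adj S.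
Proof.
move=> cover; apply/forallP=> u; apply/forallP => v; apply/implyP => uv.
have [x [dx max_x]] := geodesic_extension v u.
have [y [dy max_y]] := geodesic_extension x v.
have duv := gdist_gt0 uv; rewrite gdist_sym // in duv.
have mmd_xy : mmd x y.
  split=> // [|z adj_zx].
    by apply/eqP=> xy; move: dy; rewrite -xy gdist_refl //; have := gdist_sym G x v; lia.
  have := max_x z adj_zx; have := gdist_triangle y z v.
  have := gdist_sym G y v; have := gdist_sym G x v; lia.
have res_x : strongly_resolves adj x u v by rewrite /strongly_resolves dx eqxx.
have res_y : strongly_resolves adj y u v.
  apply/orP; right; apply/eqP.
  have := gdist_triangle x y u; have := gdist_triangle u y v; have := gdist_triangle u v y.
  have := gdist_sym G x v; have := gdist_sym G u x; have := gdist_sym G u v; lia.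
by case: (cover x y mmd_xy) => inS; apply/existsP; [exists x|exists y]; rewrite inS.
Qed.

Lemma sdim_le_card S : strong_resolving_set adj S -> sdim adj <= #|S|.
Proof. exact: (@bigmin_le_cond _ nat _ #|T| S). Qed.

Lemma card_le_sdim (I : finType) (x y : I -> T) :
  injective x -> injective y -> (forall i j, x i != y j) ->
  (forall i, mmd (x i) (y i)) -> #|I| <= sdim adj.
Proof.
move=> inj_x inj_y xy mmd_xy.
apply: (@le_bigmin _ nat _ _ _ _ _ _ (leq_card x inj_x)) => S srsS.
pose h i := if x i \in S then x i else y i.
have inj_h : injective h.
  move=> i j; rewrite /h; case: ifP => _; case: ifP => _ hij //; [exact: inj_x| | |exact: inj_y].
    by move: (xy i j); rewrite hij eqxx.
  by move: (xy j i); rewrite hij eqxx.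
have hS : h @: setT \subset S.
  apply/subsetP=> _ /imsetP[i _ ->]; rewrite /h; case: ifPn => // xiS.
  by case: (srs_covers_mmd srsS (mmd_xy i)) => //; rewrite (negbTE xiS).
by have := subset_leq_card hS; rewrite card_imset // cardsT.
Qed.

Lemma sdim_matching_cover (I : finType) (x y : I -> T) :
  injective x -> injective y -> (forall i j, x i != y j) ->
  (forall i, mmd (x i) (y i)) ->
  (forall u v, mmd u v -> u \in codom x \/ v \in codom x) -> sdim adj = #|I|.
Proof.
move=> inj_x inj_y xy mmd_xy cover.
apply/eqP; rewrite eqn_leq (card_le_sdim inj_x inj_y xy mmd_xy) andbT.
rewrite -(card_codom inj_x) -cardsE; apply/sdim_le_card/srs_of_mmd_cover => u v /cover.
by rewrite !inE.
Qed.

End StrongResolvingGraph.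

(** * Distances on a cycle *)

Definition diffn (x y : nat) : nat := (x - y) + (y - x).
Definition cycle_dist (N x y : nat) : nat := minn (diffn x y) (N - diffn x y).
Definition cycle_shift (N s x y : nat) : Prop := y = x + s \/ y + N = x + s.

Lemma odd_diffn x y : odd (diffn x y) = odd (x + y).
Proof. rewrite /diffn; lia. Qed.

Section CycleDist.
Variable N : nat.
Implicit Types x y z : nat.

Lemma cycle_dist_sym x y : cycle_dist N x y = cycle_dist N y x.
Proof. rewrite /cycle_dist /diffn; lia. Qed.

Lemma cycle_dist_triangle x y z : x < N -> y < N -> z < N ->
  cycle_dist N x z <= cycle_dist N x y + cycle_dist N y z.
Proof. rewrite /cycle_dist /diffn; lia. Qed.

Lemma cycle_dist_le_half x y : (cycle_dist N x y).*2 <= N.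
Proof. rewrite /cycle_dist /diffn; lia. Qed.

Lemma cycle_dist_le_diffn x y : cycle_dist N x y <= diffn x y.
Proof. exact: geq_minl. Qed.

Lemma cycle_dist_gt0 x y : x < N -> y < N -> x != y -> 0 < cycle_dist N x y.
Proof. rewrite /cycle_dist /diffn; lia. Qed.

Lemma odd_cycle_dist x y : x < N -> y < N -> ~~ odd N -> odd (cycle_dist N x y) = odd (x + y).
Proof. rewrite /cycle_dist /diffn; lia. Qed.

(* Reduces the shift lemmas below to a case analysis small enough for [lia]. *)
Lemma cycle_distP x y : x < N -> y < N ->
  exists2 d, x + d = y \/ y + d = x &
    cycle_dist N x y = d /\ d.*2 <= N \/ cycle_dist N x y + d = N /\ N < d.*2.
Proof. by move=> xN yN; exists (diffn x y); rewrite /cycle_dist /diffn; lia. Qed.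

Lemma cycle_dist_shift_closer s x y zp zm : x < N -> y < N -> zp < N -> zm < N ->
  s.*2 <= N -> cycle_shift N s y zp -> cycle_shift N s zm y -> s <= cycle_dist N x y ->
  cycle_dist N x zp + s = cycle_dist N x y \/ cycle_dist N x zm + s = cycle_dist N x y.
Proof.
move=> xN yN zpN zmN sN zpE zmE sc; have [d1 d1E c1E] := cycle_distP xN yN.
have [d2 d2E c2E] := cycle_distP xN zpN; have [d3 d3E c3E] := cycle_distP xN zmN.
move: zpE zmE sc c1E c2E c3E; rewrite /cycle_shift.
move: (cycle_dist N x y) (cycle_dist N x zp) (cycle_dist N x zm) => c1 c2 c3; lia.
Qed.

Lemma cycle_dist_shift_farther s x y zp zm : x < N -> y < N -> zp < N -> zm < N ->
  cycle_shift N s y zp -> cycle_shift N s zm y -> (cycle_dist N x y + s).*2 <= N ->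
  cycle_dist N x zp = cycle_dist N x y + s \/ cycle_dist N x zm = cycle_dist N x y + s.
Proof.
move=> xN yN zpN zmN zpE zmE sc; have [d1 d1E c1E] := cycle_distP xN yN.
have [d2 d2E c2E] := cycle_distP xN zpN; have [d3 d3E c3E] := cycle_distP xN zmN.
move: zpE zmE sc c1E c2E c3E; rewrite /cycle_shift.
move: (cycle_dist N x y) (cycle_dist N x zp) (cycle_dist N x zm) => c1 c2 c3; lia.
Qed.

End CycleDist.

Lemma cycle_dist_lt_half n x y : x < n.*2 -> y < n.*2 -> odd (x + y) != odd n ->
  cycle_dist n.*2 x y < n.
Proof. rewrite /cycle_dist /diffn; lia. Qed.

Lemma cycle_shift_mod N s x : x < N -> s <= N -> cycle_shift N s x ((x + s) %% N).
Proof.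
move=> xN sN; case: (ltnP (x + s) N) => [lt|ge]; first by left; rewrite modn_small.
by right; rewrite -{1}(subnK ge) modnDr modn_small; lia.
Qed.

Lemma cycle_shift_succ n i : i < n -> cycle_shift n 1 i (i.+1 %% n).
Proof. by move=> lt_i; rewrite -[i.+1]addn1; apply: cycle_shift_mod; lia. Qed.

(** * The convex polytope S_n *)

Lemma leq_half n : n./2 <= n.
Proof. lia. Qed.

Notation rA := (@Ordinal 4 0 isT).
Notation rB := (@Ordinal 4 1 isT).
Notation rC := (@Ordinal 4 2 isT).
Notation rD := (@Ordinal 4 3 isT).

Lemma ring_cases (k : 'I_4) : [\/ k = rA, k = rB, k = rC | k = rD].
Proof.
by case: k => [[|[|[|[|//]]]] k4]; [constructor 1|constructor 2|constructor 3|constructor 4];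
  apply: val_inj.
Qed.

Definition height (k : 'I_4) : nat := match nat_of_ord k with 0 => 1 | 1 => 2 | 2 => 4 | _ => 6 end.

Lemma heightE : (height rA = 1) * (height rB = 2) * (height rC = 4) * (height rD = 6).
Proof. by []. Qed.

Lemma height_inj : injective height.
Proof. by move=> k l; case: (ring_cases k) => ->; case: (ring_cases l) => ->. Qed.

Lemma height_cases k : height k = 1 \/ height k = 2 \/ height k = 4 \/ height k = 6.
Proof. by case: (ring_cases k) => ->; rewrite heightE; lia. Qed.

Lemma odd_height k : odd (height k) = (val k == 0).
Proof. by case: (ring_cases k) => ->. Qed.

Section ConvexPolytopeSn.
Variable n : nat.
Hypothesis n_ge3 : 3 <= n.
Local Notation V := (Sn_vert n).
Local Notation adj := (@Sn_adj n).

(* Put a_i at the point 2i and b_i, c_i, d_i at the point 2i+1 of a cycle of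
   length 2n, and give the rings a, b, c, d the heights 1, 2, 4, 6.  Twice the
   graph distance is then the height difference plus the circular distance. *)
Definition angle (u : V) : nat := (val u.2).*2 + (val u.1 != 0).
Definition height_dist (u v : V) : nat := diffn (height u.1) (height v.1).
Definition angular_dist (u v : V) : nat := cycle_dist n.*2 (angle u) (angle v).
Definition dist2 (u v : V) : nat := height_dist u v + angular_dist u v.

Lemma angle_lt u : angle u < n.*2.
Proof. by case: u => k [i lt_i]; rewrite /angle /=; case: (_ != _); lia. Qed.

Lemma odd_angle u : odd (angle u) = (val u.1 != 0).
Proof. by rewrite /angle oddD odd_double; case: (_ != _). Qed.

Lemma dist2_refl u : dist2 u u = 0.
Proof. rewrite /dist2 /height_dist /angular_dist /cycle_dist /diffn; lia. Qed.

Lemma dist2_sym u v : dist2 u v = dist2 v u.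
Proof. rewrite /dist2 /height_dist /angular_dist cycle_dist_sym /diffn; lia. Qed.

Lemma dist2_triangle u v w : dist2 u v <= dist2 u w + dist2 w v.
Proof.
have := cycle_dist_triangle (angle_lt u) (angle_lt w) (angle_lt v).
rewrite /dist2 /height_dist /angular_dist /diffn; lia.
Qed.

Lemma dist2_le_height u v : dist2 u v <= height_dist u v + n.
Proof. by rewrite /dist2 leq_add2l -leq_double; apply: cycle_dist_le_half. Qed.

Lemma dist2_lt_height u v :
  odd (angle u + angle v) != odd n -> dist2 u v < height_dist u v + n.
Proof. by move=> uv; rewrite /dist2 ltn_add2l; apply: cycle_dist_lt_half; rewrite ?angle_lt. Qed.

Lemma dist2_le u v : dist2 u v <= 5 + n.
Proof.
apply: leq_trans (dist2_le_height u v) _; rewrite leq_add2r /height_dist.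
by case: (ring_cases u.1) => ->; case: (ring_cases v.1) => ->.
Qed.

Lemma dist2_even u v : ~~ odd (dist2 u v).
Proof.
rewrite /dist2 /height_dist /angular_dist oddD odd_diffn odd_cycle_dist ?angle_lt ?odd_double //.
by rewrite oddD [odd (angle u + _)]oddD !odd_height !odd_angle; case: (_ == 0); case: (_ == 0).
Qed.

Lemma Sn_adj_sym : symmetric adj.
Proof. by move=> u v; rewrite /Sn_adj orbC. Qed.

Lemma dist2_edge0 w v : Sn_edge0 w v -> dist2 w v <= 2.
Proof.
case: w v => [k i] [l j]; have := ltn_ord i; have := ltn_ord j.
have := cycle_shift_succ (ltn_ord i); have := cycle_shift_succ (ltn_ord j).
rewrite /Sn_edge0 /dist2 /height_dist /angular_dist /angle /cycle_dist /diffn /cycle_shift /=.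
move: (i.+1 %% n) (j.+1 %% n) => si sj.
by case: (ring_cases k) => ->; case: (ring_cases l) => -> /=; rewrite /height -?val_eqE /=; lia.
Qed.

Lemma dist2_edge w v : adj w v -> dist2 w v <= 2.
Proof. by case/orP => /dist2_edge0; rewrite // dist2_sym. Qed.

Lemma adj_ordS k j : adj (k, ordS j) (k, j).
Proof. by rewrite /Sn_adj /Sn_edge0 !eqxx /= ?eqxx ?orbT. Qed.

Lemma adj_ord_pred k j : adj (k, ord_pred j) (k, j).
Proof. by rewrite Sn_adj_sym -{1}(ord_predK j) adj_ordS. Qed.

Lemma adj_spoke k l j : val l = (val k).+1 -> adj (k, j) (l, j).
Proof. by move=> lk; rewrite /Sn_adj /Sn_edge0 lk !eqxx /= !orbT. Qed.

Lemma adj_BA j : adj (rB, j) (rA, ordS j).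
Proof. by rewrite /Sn_adj /Sn_edge0 /= eqxx. Qed.

Lemma angle_ordS k j : cycle_shift n.*2 2 (angle (k, j)) (angle (k, ordS j)).
Proof.
have := cycle_shift_succ (ltn_ord j); rewrite /angle /cycle_shift /=.
by move: (_ %% n) => sj; lia.
Qed.

Lemma angle_ord_pred k j : cycle_shift n.*2 2 (angle (k, ord_pred j)) (angle (k, j)).
Proof. by rewrite -{2}(ord_predK j); exact: angle_ordS. Qed.

Lemma angle_spoke k l j : val k != 0 -> val l != 0 -> angle (k, j) = angle (l, j).
Proof. by rewrite /angle /= => /negbTE-> /negbTE->. Qed.

Lemma angle_AB j : angle (rB, j) = (angle (rA, j)).+1.
Proof. by rewrite /angle /= addn0 addn1. Qed.

Lemma angle_BA j : cycle_shift n.*2 1 (angle (rB, j)) (angle (rA, ordS j)).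
Proof.
have := cycle_shift_succ (ltn_ord j); rewrite /angle /cycle_shift /=.
by move: (_ %% n) => sj; lia.
Qed.

Lemma rim_neighbors x : val x.1 <= 1 -> exists zp zm : V,
  [/\ adj zp x, adj zm x, cycle_shift n.*2 1 (angle x) (angle zp),
      cycle_shift n.*2 1 (angle zm) (angle x)
    & height zp.1 + height x.1 = 3 /\ height zm.1 + height x.1 = 3].
Proof.
case: x => k j; case: (ring_cases k) => -> //= _.
  exists (rB, j), (rB, ord_pred j); split=> //.
  - by rewrite Sn_adj_sym adj_spoke.
  - by rewrite -{2}(ord_predK j) adj_BA.
  - by left; rewrite angle_AB addn1.
  - by rewrite -{2}(ord_predK j); exact: angle_BA.
exists (rA, ordS j), (rA, j); split=> //.
- by rewrite Sn_adj_sym adj_BA.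
- exact: adj_spoke.
- exact: angle_BA.
- by left; rewrite angle_AB addn1.
Qed.

Lemma ring_neighbors x : exists zp zm : V,
  [/\ adj zp x, adj zm x, cycle_shift n.*2 2 (angle x) (angle zp),
      cycle_shift n.*2 2 (angle zm) (angle x) & zp.1 = x.1 /\ zm.1 = x.1].
Proof.
case: x => k j; exists (k, ordS j), (k, ord_pred j).
by split; [exact: adj_ordS|exact: adj_ord_pred|exact: angle_ordS|exact: angle_ord_pred|].
Qed.

Lemma rim_step_closer u x : val x.1 <= 1 -> 0 < angular_dist u x -> exists2 z, adj z x &
  height z.1 + height x.1 = 3 /\ (angular_dist u z).+1 = angular_dist u x.
Proof.
move=> /rim_neighbors[zp [zm [adj_p adj_m shift_p shift_m [hp hm]]]] ux.
have le_1n : 1.*2 <= n.*2 by lia.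
have [d|d] := cycle_dist_shift_closer (angle_lt u) (angle_lt x) (angle_lt zp)
  (angle_lt zm) le_1n shift_p shift_m ux.
  by exists zp => //; split=> //; rewrite /angular_dist; lia.
by exists zm => //; split=> //; rewrite /angular_dist; lia.
Qed.

Lemma rim_step_farther u x : val x.1 <= 1 -> angular_dist u x < n -> exists2 z, adj z x &
  height z.1 + height x.1 = 3 /\ angular_dist u z = (angular_dist u x).+1.
Proof.
move=> /rim_neighbors[zp [zm [adj_p adj_m shift_p shift_m [hp hm]]]] ux.
have ux2 : (angular_dist u x + 1).*2 <= n.*2 by lia.
have [d|d] := cycle_dist_shift_farther (angle_lt u) (angle_lt x) (angle_lt zp)
  (angle_lt zm) shift_p shift_m ux2.
  by exists zp => //; split=> //; rewrite /angular_dist; lia.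
by exists zm => //; split=> //; rewrite /angular_dist; lia.
Qed.

Lemma ring_step_closer u x : 2 <= angular_dist u x -> exists2 z, adj z x &
  z.1 = x.1 /\ angular_dist u z + 2 = angular_dist u x.
Proof.
have [zp [zm [adj_p adj_m shift_p shift_m [hp hm]]]] := ring_neighbors x.
move=> ux; have le_2n : 2.*2 <= n.*2 by lia.
have [d|d] := cycle_dist_shift_closer (angle_lt u) (angle_lt x) (angle_lt zp)
  (angle_lt zm) le_2n shift_p shift_m ux.
  by exists zp.
by exists zm.
Qed.

Lemma angular_dist_gt0 u v : (val u.1 == 0) != (val v.1 == 0) -> 0 < angular_dist u v.
Proof.
move=> uv; apply: cycle_dist_gt0; rewrite ?angle_lt //.
apply: contra uv => /eqP/(congr1 odd); rewrite !odd_angle.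
by case: (_ == 0); case: (_ == 0).
Qed.

Lemma angular_dist_ge2 u v : u.1 = v.1 -> u != v -> 2 <= angular_dist u v.
Proof.
case: u v => [k i] [l j] /= <-; rewrite xpair_eqE eqxx /= -val_eqE /= => ij.
have := ltn_ord i; have := ltn_ord j.
by rewrite /angular_dist /angle /cycle_dist /diffn /=; case: (_ != _); lia.
Qed.

Lemma angular_dist_spoke u j k l : val k != 0 -> val l != 0 ->
  angular_dist u (k, j) = angular_dist u (l, j).
Proof. by move=> k0 l0; rewrite /angular_dist (angle_spoke j k0 l0). Qed.

Lemma dist2_pred u v : v != u -> exists2 w, adj w v & dist2 u w + 2 = dist2 u v.
Proof.
case: u => k i; case: v => l j vu; rewrite /dist2 /height_dist /diffn /=.
have := height_cases k.
case: (ltngtP (height k) (height l)) => [kl|lk|/height_inj kl].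
- case: (ring_cases l) kl vu => -> kl vu hk; rewrite ?heightE in kl *; first lia.
  + have kA : k = rA by apply: height_inj; rewrite !heightE; lia.
    have [|z adj_z [hz dz]] := @rim_step_closer (k, i) (rB, j) isT.
      by apply: angular_dist_gt0; rewrite kA.
    by exists z => //; move: hz; rewrite -dz kA /= !heightE; lia.
  + exists (rB, j); first exact: adj_spoke.
    by rewrite (@angular_dist_spoke _ j rB rC) //= !heightE; lia.
  + exists (rC, j); first exact: adj_spoke.
    by rewrite (@angular_dist_spoke _ j rC rD) //= !heightE; lia.
- case: (ring_cases l) lk vu => -> lk vu hk; rewrite ?heightE in lk *; last lia.
  + have [|z adj_z [hz dz]] := @rim_step_closer (k, i) (rA, j) isT.
      by apply: angular_dist_gt0; case: (ring_cases k) lk => ->; rewrite ?heightE.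
    by exists z => //; move: hz; rewrite -dz /= !heightE; lia.
  + exists (rC, j); first by rewrite Sn_adj_sym adj_spoke.
    by rewrite (@angular_dist_spoke _ j rC rB) //= !heightE; lia.
  + exists (rD, j); first by rewrite Sn_adj_sym adj_spoke.
    by rewrite (@angular_dist_spoke _ j rD rC) //= !heightE; lia.
- have [|z adj_z [zl dz]] := @ring_step_closer (k, i) (l, j).
    by apply: angular_dist_ge2; rewrite // eq_sym.
  by exists z => //; rewrite -dz zl /= -kl; lia.
Qed.

Lemma card_Sn_vert : #|V| = 4 * n.
Proof. by rewrite card_prod !card_ord. Qed.

Lemma gdist_Sn u v : (gdist adj u v).*2 = dist2 u v.
Proof.
rewrite (@gdist_potential _ _ u (fun w => (dist2 u w)./2)).
- by have := dist2_even u v; lia.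
- by rewrite dist2_refl.
- move=> w z /dist2_edge; have := dist2_triangle u w z; lia.
- move=> w /dist2_pred[z adj_z dz]; exists z => //; lia.
- by rewrite card_Sn_vert; have := dist2_le u v; lia.
Qed.

Lemma leq_gdist_Sn u v u' v' : (gdist adj u v <= gdist adj u' v') = (dist2 u v <= dist2 u' v').
Proof. by rewrite -leq_double !gdist_Sn. Qed.

Lemma Sn_metric : metric_graph adj.
Proof.
have gdistE u v : gdist adj u v = (dist2 u v)./2 by rewrite -gdist_Sn doubleK.
split=> [|u|u v|u v w /dist2_edge|u v /dist2_pred[w adj_w dw]]; rewrite ?gdistE.
- exact: Sn_adj_sym.
- by rewrite dist2_refl.
- by rewrite dist2_sym.
- by have := dist2_triangle u v w; lia.
- by exists w; rewrite // !gdistE; lia.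
Qed.

Local Notation mmd := (mutually_maximally_distant adj).

Lemma mmd_Sn x y : x != y -> (forall z, adj z y -> dist2 x z <= dist2 x y) ->
  (forall z, adj z x -> dist2 y z <= dist2 x y) -> mmd x y.
Proof.
by move=> xy far_y far_x; split=> // z adj_z; rewrite leq_gdist_Sn; [apply: far_y|apply: far_x].
Qed.

Lemma not_mmd_Sn p q z : adj z q -> dist2 p q < dist2 p z -> ~ mmd p q.
Proof. by move=> adj_zq; rewrite ltnNge -leq_gdist_Sn => /negP far [_ /(_ z adj_zq)]. Qed.

Lemma not_mmd_up p q : 1 <= val q.1 <= 2 -> height p.1 <= height q.1 -> ~ mmd p q.
Proof.
case: p => k i; case: q => l j /=; case: (ring_cases l) => -> //= _; rewrite heightE => hk.
  apply: (@not_mmd_Sn _ _ (rC, j)); first by rewrite Sn_adj_sym adj_spoke.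
  by rewrite /dist2 (@angular_dist_spoke _ j rC rB) // /height_dist /diffn /= !heightE; lia.
apply: (@not_mmd_Sn _ _ (rD, j)); first by rewrite Sn_adj_sym adj_spoke.
by rewrite /dist2 (@angular_dist_spoke _ j rD rC) // /height_dist /diffn /= !heightE; lia.
Qed.

Lemma not_mmd_down p q : 2 <= val p.1 -> height p.1 <= height q.1 -> ~ mmd p q.
Proof.
case: p => k i; case: q => l j /=; case: (ring_cases k) => -> //= _.
  rewrite heightE => hl /(mmd_sym Sn_metric); apply: (@not_mmd_Sn _ _ (rB, i)).
    exact: adj_spoke.
  by rewrite /dist2 (@angular_dist_spoke _ i rB rC) // /height_dist /diffn /= !heightE; lia.
rewrite heightE => hl /(mmd_sym Sn_metric); apply: (@not_mmd_Sn _ _ (rC, i)).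
  exact: adj_spoke.
by rewrite /dist2 (@angular_dist_spoke _ i rC rD) // /height_dist /diffn /= !heightE; lia.
Qed.

Lemma not_mmd_BD (i j : 'I_n) : odd n -> ~ mmd (rB, i) (rD, j).
Proof.
move=> n_odd /(mmd_sym Sn_metric).
have [|z adj_z [hz dz]] := @rim_step_farther (rD, j) (rB, i) isT.
  by apply: cycle_dist_lt_half; rewrite ?angle_lt // oddD !odd_angle n_odd.
apply: (not_mmd_Sn adj_z); move: hz; rewrite /dist2 dz /height_dist /diffn /= !heightE; lia.
Qed.

Lemma not_mmd_AA (i j : 'I_n) : n./2 <= i -> n./2 <= j -> i != j -> ~ mmd (rA, i) (rA, j).
Proof.
move=> hi hj ij.
have [|z adj_z [hz dz]] := @rim_step_farther (rA, i) (rA, j) isT.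
  have := cycle_dist_le_diffn n.*2 (angle (rA, i)) (angle (rA, j)).
  have := ltn_ord i; have := ltn_ord j; move: ij; rewrite -val_eqE.
  rewrite /angular_dist /angle /diffn /=; lia.
apply: (not_mmd_Sn adj_z); move: hz; rewrite /dist2 dz /height_dist /diffn /= !heightE; lia.
Qed.

Lemma mmd_Sn_cover_odd p q : odd n -> mmd p q -> p.1 = rA \/ q.1 = rA.
Proof.
move=> n_odd; wlog le_pq : p q / height p.1 <= height q.1.
  move=> wlog_le pq; case: (leqP (height p.1) (height q.1)) => [|/ltnW] le.
    exact: wlog_le.
  by case: (wlog_le q p le (mmd_sym Sn_metric pq)); [right|left].
case: p q le_pq => [k i] [l j] /= le_kl pq.
case: (ring_cases l) le_kl pq => -> le_kl pq; first by right.
- by case: (@not_mmd_up (k, i) (rB, j) isT le_kl pq).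
- by case: (@not_mmd_up (k, i) (rC, j) isT le_kl pq).
case: (ring_cases k) le_kl pq => -> le_kl pq; first by left.
- by case: (not_mmd_BD n_odd pq).
- by case: (@not_mmd_down (rC, i) (rD, j) isT le_kl pq).
- by case: (@not_mmd_down (rD, i) (rD, j) isT le_kl pq).
Qed.

Definition even_cover (u : V) : bool := (u.1 == rD) || (u.1 == rA) && (u.2 < n./2).

Lemma mmd_Sn_cover_even p q : mmd p q -> even_cover p \/ even_cover q.
Proof.
wlog le_pq : p q / height p.1 <= height q.1.
  move=> wlog_le pq; case: (leqP (height p.1) (height q.1)) => [|/ltnW] le.
    exact: wlog_le.
  by case: (wlog_le q p le (mmd_sym Sn_metric pq)); [right|left].
case: p q le_pq => [k i] [l j] /= le_kl pq; rewrite /even_cover /=.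
case: (ring_cases l) le_kl pq => -> le_kl pq.
- case: (ltnP j n./2) => [|hj]; first by right.
  have kA : k = rA by apply: height_inj; move: le_kl; have := height_cases k; rewrite !heightE; lia.
  case: (ltnP i n./2) => [|hi]; first by left; rewrite kA.
  have ij : i != j by case: pq; rewrite kA xpair_eqE eqxx.
  by move: pq; rewrite kA => /(not_mmd_AA hi hj ij).
- by case: (@not_mmd_up (k, i) (rB, j) isT le_kl pq).
- by case: (@not_mmd_up (k, i) (rC, j) isT le_kl pq).
- by right.
Qed.

Definition half_turn (i : 'I_n) : 'I_n :=
  Ordinal (ltn_pmod (i + n./2) (leq_ltn_trans (leq0n i) (ltn_ord i))).

Lemma half_turn_inj : injective half_turn.
Proof.
move=> i j /(congr1 val) /= /eqP; rewrite eqn_modDr !modn_small // => /eqP.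
exact: val_inj.
Qed.

Lemma angular_dist_half_turn k l i :
  angle (l, i) = angle (k, i) + odd n -> angular_dist (k, i) (l, half_turn i) = n.
Proof.
have half_le : n./2 <= n by lia.
have := cycle_shift_mod (ltn_ord i) half_le.
rewrite /angular_dist /angle /cycle_dist /diffn /cycle_shift /=.
by move: (_ %% n) => h; case: (val k != 0); case: (val l != 0); lia.
Qed.

Lemma half_turn_low (i : 'I_n) : i < n./2 -> val (half_turn i) = i + n./2.
Proof. by move=> lt_i; rewrite /= modn_small //; lia. Qed.

Lemma adj_A_rim z (j : 'I_n) : adj z (rA, j) -> val z.1 <= 1.
Proof. by case: z => k i; case: (ring_cases k) => ->. Qed.

Lemma dist2_A_rim_le (j : 'I_n) z : ~~ odd n -> val z.1 <= 1 -> dist2 (rA, j) z <= n.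
Proof.
case: z => k i n_even /=; case: (ring_cases k) => -> // _.
  exact: dist2_le_height.
by apply: (@dist2_lt_height (rA, j) (rB, i)); rewrite oddD !odd_angle (negbTE n_even).
Qed.

Lemma mmd_AD_half_turn (i : 'I_n) : odd n -> mmd (rA, i) (rD, half_turn i).
Proof.
move=> n_odd; have d_AD : dist2 (rA, i) (rD, half_turn i) = 5 + n.
  rewrite /dist2 angular_dist_half_turn; last by rewrite n_odd /angle /= addn0 addn1.
  by rewrite /height_dist /diffn /= !heightE.
by apply: mmd_Sn => [|z _|z _]; rewrite ?xpair_eqE ?d_AD ?dist2_le.
Qed.

Lemma mmd_AA_half_turn (i : 'I_n) : i < n./2 -> ~~ odd n -> mmd (rA, i) (rA, half_turn i).
Proof.
move=> lt_i n_even; have d_AA : dist2 (rA, i) (rA, half_turn i) = n.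
  rewrite /dist2 angular_dist_half_turn; last by rewrite (negbTE n_even) addn0.
  by rewrite /height_dist /diffn subnn.
apply: mmd_Sn => [|z /adj_A_rim|z /adj_A_rim]; rewrite ?d_AA; try exact: dist2_A_rim_le.
by rewrite xpair_eqE eqxx /= -val_eqE half_turn_low //=; lia.
Qed.

Lemma mmd_DB_half_turn (i : 'I_n) : ~~ odd n -> mmd (rD, i) (rB, half_turn i).
Proof.
move=> n_even; have d_DB : dist2 (rD, i) (rB, half_turn i) = 4 + n.
  rewrite /dist2 angular_dist_half_turn; last by rewrite (negbTE n_even) addn0.
  by rewrite /height_dist /diffn /= !heightE.
apply: mmd_Sn => [|[k j] _|z _]; rewrite ?d_DB ?xpair_eqE //.
  case: (ring_cases k) => ->; try by apply: leq_trans (dist2_le_height _ _) _;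
    rewrite leq_add2r /height_dist /diffn /= !heightE.
  by apply: (@dist2_lt_height (rD, i) (rA, j)); rewrite oddD !odd_angle (negbTE n_even).
apply: leq_trans (dist2_le_height _ _) _; rewrite leq_add2r /height_dist.
by case: (ring_cases z.1) => ->.
Qed.

Lemma sdim_Sn_odd : odd n -> sdim adj = n.
Proof.
move=> n_odd; rewrite -[RHS]card_ord.
apply: (@sdim_matching_cover _ _ Sn_metric _ (fun i => (rA, i)) (fun i => (rD, half_turn i))).
- by move=> i j [].
- by move=> i j /(congr1 snd) /half_turn_inj.
- by [].
- by move=> i; exact: mmd_AD_half_turn.
by move=> [k i] [l j] /(mmd_Sn_cover_odd n_odd) /= [->|->]; [left|right]; exact: codom_f.
Qed.

Definition even_cover_vert (t : 'I_n./2 + 'I_n) : V :=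
  match t with inl i => (rA, widen_ord (leq_half n) i) | inr j => (rD, j) end.

Definition even_partner (t : 'I_n./2 + 'I_n) : V :=
  match t with inl i => (rA, half_turn (widen_ord (leq_half n) i)) | inr j => (rB, half_turn j) end.

Lemma sdim_Sn_even : ~~ odd n -> sdim adj = n./2 + n.
Proof.
move=> n_even; have -> : n./2 + n = #|{: 'I_n./2 + 'I_n}| by rewrite card_sum !card_ord.
apply: (sdim_matching_cover Sn_metric (x := even_cover_vert) (y := even_partner)).
- move=> [i|j] [i'|j'] // /(congr1 snd) /=; first by move=> /(congr1 val) /= /val_inj ->.
  by move=> ->.
- move=> [i|j] [i'|j'] // /(congr1 snd) /= /half_turn_inj.
    by move=> /(congr1 val) /= /val_inj ->.
  by move=> ->.
- move=> [i|j] [i'|j'] //=; rewrite xpair_eqE eqxx /= -val_eqE half_turn_low //=.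
  by have := ltn_ord i; lia.
- move=> [i|j] /=; last exact: mmd_DB_half_turn.
  exact: (@mmd_AA_half_turn (widen_ord (leq_half n) i) (ltn_ord i) n_even).
move=> u v /mmd_Sn_cover_even.
suff cover u' : even_cover u' -> u' \in codom even_cover_vert by case=> /cover; [left|right].
case: u' => k i; rewrite /even_cover /= => /orP[/eqP->|/andP[/eqP-> lt_i]].
  exact: (codom_f even_cover_vert (inr i)).
by apply/codomP; exists (inl (Ordinal lt_i)); congr pair; apply: val_inj.
Qed.

End ConvexPolytopeSn.

Theorem theorem3p2 (n : nat) : 3 <= n ->
  sdim (@Sn_adj n) = (if odd n then n else (3 * n) %/ 2).
Proof.
move=> n_ge3; case: ifP => [n_odd|/negbT n_even]; first exact: sdim_Sn_odd.
by rewrite sdim_Sn_even //; lia.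
Qed.
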